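(* Let $\alpha$ be a reduced operation sequence and $\lambda$ a push operation of $\alpha$. If the pop operations of $\alpha$ corresponding to $\lambda$ do not occupy a set of consecutive positions of $\alpha$ (i.e. they do not form a subword), then $\lambda$ is fixed.
   Context: Operation sequences: $\sigma[a]$ ($a\ge1$) denotes pushing the top $a$ elements of the input stack, as a block with relative order unchanged, onto the top of a working stack; $\tau[b]$ ($b\ge1$) denotes moving the top $b$ elements of the working stack, as a block with relative order unchanged, onto the top of an output stack; $\sigma=\sigma[1]$, $\tau=\tau[1]$. A well-formed operation sequence is a word $\alpha=\alpha_1\cdots\alpha_m$ in these symbols such that in every prefix the total push size is at least the total pop size, with equality for the whole word; its size $n$ is the total push size. Acting on an input stack containing $1,\dots,n$ with $1$ on top, it produces the permutation read from the final output stack top to bottom. Two well-formed sequences are equivalent if they have the same size and produce the same permutation. $\alpha$ is reduced if every consecutive pair $\alpha_i\alpha_{i+1}$ with $\alpha_i$ a push and $\alpha_{i+1}$ a pop equals $\sigma[1]\tau[1]$. The vertices of $\alpha$ are $v_0=(0,0)$ and $v_i=v_{i-1}+(a,a)$ if $\alpha_i=\sigma[a]$, $v_i=v_{i-1}+(b,-b)$ if $\alpha_i=\tau[b]$. The support of a push (resp. pop) is the set of elements it places on (resp. removes from) the working stack when $\alpha$ acts on input $1,\dots,n$. A push and a pop correspond if their supports intersect. An operation $\alpha_i$ of a reduced sequence $\alpha$ is fixed if for every reduced sequence $\beta=\beta_1\cdots\beta_{m'}$ equivalent to $\alpha$, with vertices $w_0,\dots,w_{m'}$, there is $j$ with $w_{j-1}=v_{i-1}$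 and $w_j=v_i$. *)

From mathcomp Require Import all_boot all_order all_algebra.
Set Implicit Arguments. Unset Strict Implicit. Unset Printing Implicit Defensive.

(* An operation: Push a = sigma[a], Pop b = tau[b]. *)
Inductive op := Push of nat | Pop of nat.

Definition is_push (o : op) : bool := if o is Push _ then true else false.
Definition is_pop (o : op) : bool := if o is Pop _ then true else false.
Definition push_size (o : op) : nat := if o is Push a then a else 0.
Definition pop_size (o : op) : nat := if o is Pop b then b else 0.
Definition op_size (o : op) : nat := match o with Push a => a | Pop b => b end.

Definition pushes (s : seq op) : nat := sumn (map push_size s).
Definition pops (s : seq op) : nat := sumn (map pop_size s).

Definition opsize (s : seq op) : nat := pushes s.

Definition well_formed (s : seq op) : Prop :=
  all (fun o => 0 < op_size o) s /\
  (forall k, k <= size s -> pops (take k s) <= pushes (take k s)) /\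
  pops s = pushes s.

(* states: (input stack, working stack, output stack), lists with head = top *)
Definition state := (seq nat * seq nat * seq nat)%type.

(* one step; second component = the block of elements moved (the support) *)
Definition step (st : state) (o : op) : state * seq nat :=
  let: (inp, w, out) := st in
  match o with
  | Push a => ((drop a inp, take a inp ++ w, out), take a inp)
  | Pop b => ((inp, drop b w, take b w ++ out), take b w)
  end.

Definition run (st : state) (s : seq op) : state :=
  foldl (fun st o => (step st o).1) st s.

Definition init_state (s : seq op) : state := (iota 1 (opsize s), [::], [::]).

(* the permutation produced: output stack read top to bottom *)
Definition produced (s : seq op) : seq nat := (run (init_state s) s).2.

Definition equivalent (s t : seq op) : Prop :=
  well_formed s /\ well_formed t /\ opsize s = opsize t /\ produced s = produced t.

Definition reduced (s : seq op) : Prop :=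
  forall k, k.+1 < size s ->
    is_push (nth (Pop 0) s k) -> is_pop (nth (Pop 0) s k.+1) ->
    nth (Pop 0) s k = Push 1 /\ nth (Pop 0) s k.+1 = Pop 1.

Definition vstep (v : nat * int) (o : op) : nat * int :=
  match o with
  | Push a => (v.1 + a, (v.2 + a%:Z)%R)
  | Pop b => (v.1 + b, (v.2 - b%:Z)%R)
  end.

Definition vertex (s : seq op) (k : nat) : nat * int :=
  foldl vstep (0, 0%R) (take k s).

Definition support (s : seq op) (i : nat) : seq nat :=
  (step (run (init_state s) (take i s)) (nth (Pop 0) s i)).2.

Definition corresponds (s : seq op) (i j : nat) : Prop :=
  is_push (nth (Pop 0) s i) /\ is_pop (nth (Pop 0) s j) /\ j < size s /\
  exists x, x \in support s i /\ x \in support s j.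

(* the operation at 0-based position i (i.e. alpha_{i+1}, from v_i to v_{i+1})
   is fixed *)
Definition fixed (s : seq op) (i : nat) : Prop :=
  forall t, reduced t -> equivalent s t ->
    exists j, j < size t /\ vertex t j = vertex s i /\ vertex t j.+1 = vertex s i.+1.

From Pilot Require Import Defs.
From mathcomp Require Import all_boot all_order all_algebra.
From mathcomp Require Import zify.
Set Implicit Arguments. Unset Strict Implicit. Unset Printing Implicit Defensive.

(* The elements of the block pushed at i leave the working stack in increasing
   order.  If the pops corresponding to this push are not consecutive, two
   consecutive elements y, y + 1 of the block are popped by non-adjacent pops,
   so some element g is popped strictly between them.  Reducedness forces the
   first pop after i to be a pair sigma tau, popping a single element e pushed
   after the block.  An equivalent sequence produces the same permutation,
   hence the same order [before] on the output stack, which records which of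
   two elements was popped later and, if they left together, which lay higher
   on the working stack.  Comparing y, y + 1, g, e and the first elements of
   the neighbouring blocks in this order shows that in any equivalent reduced
   sequence y and y + 1 are pushed by a single push whose block is exactly that
   of the push at i, and that exactly the same elements have been popped before
   it; so that push joins the same two vertices. *)

(** * Runs of an operation sequence *)

Definition state_at (s : seq op) (t : nat) : state := run (init_state s) (take t s).
Definition input_at (s : seq op) (t : nat) : seq nat := (state_at s t).1.1.
Definition work_at (s : seq op) (t : nat) : seq nat := (state_at s t).1.2.
Definition output_at (s : seq op) (t : nat) : seq nat := (state_at s t).2.
Definition pushed (s : seq op) (t : nat) : nat := pushes (take t s).
Definition popped (s : seq op) (t : nat) : nat := pops (take t s).

Section Run.
Variable s : seq op.

Lemma state_at_succ t :
  t < size s -> state_at s t.+1 = (step (state_at s t) (nth (Pop 0) s t)).1.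
Proof. by move=> lt_ts; rewrite /state_at (take_nth (Pop 0) lt_ts) /run foldl_rcons. Qed.

Lemma pushed_succ t :
  t < size s -> pushed s t.+1 = pushed s t + push_size (nth (Pop 0) s t).
Proof.
by move=> lt_ts; rewrite /pushed (take_nth (Pop 0) lt_ts) /pushes -cats1 map_cat sumn_cat /= addn0.
Qed.

Lemma popped_succ t :
  t < size s -> popped s t.+1 = popped s t + pop_size (nth (Pop 0) s t).
Proof.
by move=> lt_ts; rewrite /popped (take_nth (Pop 0) lt_ts) /pops -cats1 map_cat sumn_cat /= addn0.
Qed.

Lemma push_step t a : t < size s -> nth (Pop 0) s t = Push a ->
  [/\ input_at s t.+1 = drop a (input_at s t),
      work_at s t.+1 = take a (input_at s t) ++ work_at s t &
      output_at s t.+1 = output_at s t].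
Proof.
move=> lt_ts st_a; rewrite /input_at /work_at /output_at state_at_succ // st_a.
by case: (state_at s t) => [[]].
Qed.

Lemma pop_step t b : t < size s -> nth (Pop 0) s t = Pop b ->
  [/\ input_at s t.+1 = input_at s t,
      work_at s t.+1 = drop b (work_at s t) &
      output_at s t.+1 = take b (work_at s t) ++ output_at s t].
Proof.
move=> lt_ts st_b; rewrite /input_at /work_at /output_at state_at_succ // st_b.
by case: (state_at s t) => [[]].
Qed.

Lemma pushed0 : pushed s 0 = 0. Proof. by rewrite /pushed take0. Qed.
Lemma popped0 : popped s 0 = 0. Proof. by rewrite /popped take0. Qed.
Lemma output_at0 : output_at s 0 = [::]. Proof. by rewrite /output_at /state_at take0. Qed.

Lemma pushed_size : pushed s (size s) = pushes s. Proof. by rewrite /pushed take_size. Qed.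
Lemma popped_size : popped s (size s) = pops s. Proof. by rewrite /popped take_size. Qed.

Lemma pushed_le t : pushed s t <= pushes s.
Proof. by rewrite /pushed -{2}(cat_take_drop t s) /pushes map_cat sumn_cat leq_addr. Qed.

Lemma pushed_mono t1 t2 : t1 <= t2 -> pushed s t1 <= pushed s t2.
Proof. by move=> le12; rewrite /pushed -(subnKC le12) takeD /pushes map_cat sumn_cat leq_addr. Qed.

Lemma op_size_gt0 t : well_formed s -> t < size s -> 0 < op_size (nth (Pop 0) s t).
Proof. by move=> [/(all_nthP (Pop 0)) pos _] /pos. Qed.

Definition run_invariant t :=
  [/\ input_at s t = drop (pushed s t) (iota 1 (opsize s)),
      uniq (work_at s t ++ output_at s t),
      (forall z, (z \in work_at s t ++ output_at s t) = (0 < z <= pushed s t)),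
      size (work_at s t) + popped s t = pushed s t &
      size (output_at s t) = popped s t].

Lemma run_invariantP t : well_formed s -> t <= size s -> run_invariant t.
Proof.
move=> [_ [prefix _]]; elim: t => [|t IH] le_ts.
  rewrite /run_invariant /input_at /work_at /output_at /state_at take0 /=.
  by rewrite pushed0 popped0 drop0; split=> // z; rewrite in_nil; lia.
have lt_ts : t < size s by [].
have [Ein Euniq Emem Ework Eout] := IH (ltnW le_ts).
have pref := prefix _ le_ts; rewrite -/(pushed s t.+1) -/(popped s t.+1) in pref.
have Epu := pushed_succ lt_ts; have Epo := popped_succ lt_ts.
case st_t: (nth (Pop 0) s t) Epu Epo => [a|b] /= Epu Epo.
- have [E1 E2 E3] := push_step lt_ts st_t.
  have le_n : pushed s t.+1 <= opsize s by apply: pushed_le.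
  have block : take a (input_at s t) = iota (pushed s t).+1 a.
    by rewrite Ein drop_iota take_iota add1n; congr iota; lia.
  rewrite /run_invariant E1 E2 E3 block Ein drop_drop Epu Epo addn0; split.
  + by rewrite addnC.
  + rewrite -catA cat_uniq iota_uniq Euniq /= andbT.
    by apply/hasPn => z /=; rewrite Emem mem_iota; lia.
  + by move=> z; rewrite -catA mem_cat Emem mem_iota; lia.
  + rewrite size_cat size_iota; lia.
  + done.
- have [E1 E2 E3] := pop_step lt_ts st_t.
  have perm : perm_eq (work_at s t.+1 ++ output_at s t.+1) (work_at s t ++ output_at s t).
    by rewrite E2 E3 catA perm_cat2r perm_catC cat_take_drop.
  rewrite addn0 in Epu; split.
  + by rewrite E1 Ein Epu.
  + by rewrite (perm_uniq perm).
  + by move=> z; rewrite (perm_mem perm) Emem Epu.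
  + rewrite E2 size_drop Epu Epo; lia.
  + rewrite E3 size_cat size_take_min Epo; lia.
Qed.

Lemma pop_size_le_work t b : well_formed s -> t < size s -> nth (Pop 0) s t = Pop b ->
  b <= size (work_at s t).
Proof.
move=> wf lt_ts st_b; have [_ _ _ Ework _] := run_invariantP wf (ltnW lt_ts).
have [_ [prefix _]] := wf; have := prefix _ lt_ts.
have Epu := pushed_succ lt_ts; have Epo := popped_succ lt_ts.
rewrite st_b /= addn0 /pushed /popped in Epu Epo Ework; lia.
Qed.

End Run.

(** * Push and pop times of an element *)

Lemma find_iota_leq (P : pred nat) m t : t < m -> P t -> find P (iota 0 m) <= t.
Proof.
move=> lt_tm Pt; rewrite leqNgt; apply/negP => /(before_find 0).
by rewrite nth_iota // add0n Pt.
Qed.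

Lemma find_iota_sat (P : pred nat) m :
  find P (iota 0 m) < m -> P (find P (iota 0 m)).
Proof.
move=> lt_m; have := @nth_find _ 0 P (iota 0 m).
by rewrite has_find size_iota nth_iota // add0n => ->.
Qed.

Lemma mem_cat_uniq_l (T : eqType) (a b : seq T) z :
  uniq (a ++ b) -> (z \in a) = (z \in a ++ b) && (z \notin b).
Proof.
rewrite cat_uniq mem_cat => /and3P [_ /hasPn dis _].
case a_z: (z \in a); case b_z: (z \in b) => //=.
by have := dis z b_z; rewrite /= a_z.
Qed.

Lemma pairwise_iota (r : rel nat) k a :
  (forall u v, k <= u -> u < v -> v < k + a -> r u v) -> pairwise r (iota k a).
Proof.
elim: a k => [|a IH] k r_uv //=; apply/andP; split.
- by apply/allP => v; rewrite mem_iota => v_in; apply: r_uv; lia.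
- by apply: IH => u v *; apply: r_uv; lia.
Qed.

(* The step that pushes, resp. pops, z; [size s] if there is none. *)
Definition push_index (s : seq op) (z : nat) : nat :=
  find (fun t => z <= pushed s t.+1) (iota 0 (size s)).
Definition pop_index (s : seq op) (z : nat) : nat :=
  find (fun t => z \in output_at s t.+1) (iota 0 (size s)).

Section Indices.
Variable s : seq op.
Local Notation elt z := (0 < z <= pushes s).

Lemma push_indexP z t : elt z -> t <= size s -> (z <= pushed s t) = (push_index s z < t).
Proof.
move=> z_elt le_ts; apply/idP/idP => [|lt_zt].
- case: t le_ts => [|t] le_ts; first by rewrite pushed0; lia.
  by rewrite ltnS => le_z; apply: find_iota_leq.
- have := @find_iota_sat (fun t => z <= pushed s t.+1) (size s)
    ltac:(rewrite -/(push_index s z); lia).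
  by move/leq_trans; apply; apply: pushed_mono.
Qed.

Lemma output_at_mono z t t' : z \in output_at s t -> t <= t' -> t' <= size s ->
  z \in output_at s t'.
Proof.
move=> z_out; elim: t' => [|t' IH] le_tt' le_t's.
  by move: z_out; have -> : t = 0 by lia.
case: (ltnP t t'.+1) => [lt_tt'|ge_tt']; last by have -> : t'.+1 = t by lia.
have lt_t's : t' < size s by [].
case st: (nth (Pop 0) s t') => [a|b].
- by have [_ _ ->] := push_step lt_t's st; apply: IH; lia.
- by have [_ _ ->] := pop_step lt_t's st; rewrite mem_cat IH ?orbT //; lia.
Qed.

Lemma pop_indexP z t : t <= size s -> (z \in output_at s t) = (pop_index s z < t).
Proof.
move=> le_ts; apply/idP/idP => [|lt_zt].
- case: t le_ts => [|t] le_ts; first by rewrite output_at0.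
  by rewrite ltnS => z_out; apply: find_iota_leq.
- have := @find_iota_sat (fun t => z \in output_at s t.+1) (size s)
    ltac:(rewrite -/(pop_index s z); lia).
  by move/output_at_mono; apply.
Qed.

Lemma push_index_lt z : elt z -> push_index s z < size s.
Proof. by move=> z_elt; rewrite -(push_indexP z_elt (leqnn _)) pushed_size; case/andP: z_elt. Qed.

Lemma push_index_bounds z : elt z ->
  pushed s (push_index s z) < z /\ z <= pushed s (push_index s z).+1.
Proof.
move=> z_elt; have lt_zs := push_index_lt z_elt.
have := push_indexP z_elt (ltnW lt_zs); have := push_indexP z_elt lt_zs.
rewrite ltnn ltnSn; lia.
Qed.

Lemma push_indexE z t : elt z -> t < size s ->
  (push_index s z == t) = (pushed s t < z <= pushed s t.+1).
Proof.
move=> z_elt lt_ts; have := push_indexP z_elt lt_ts; have := push_indexP z_elt (ltnW lt_ts).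
lia.
Qed.

Lemma push_index_mono u v : 0 < u -> v <= pushes s -> u <= v -> push_index s u <= push_index s v.
Proof.
move=> u_gt0 v_le le_uv; have v_elt : elt v by lia.
have [_ le_v] := push_index_bounds v_elt.
have := push_indexP (_ : elt u) (push_index_lt v_elt); lia.
Qed.

Lemma push_index_between u v w : 0 < u -> w <= pushes s -> u <= v <= w ->
  push_index s u = push_index s w -> push_index s v = push_index s u.
Proof.
move=> u_gt0 w_le /andP [le_uv le_vw] Euw.
have := push_index_mono u_gt0 (leq_trans le_vw w_le) le_uv.
have := push_index_mono (leq_trans u_gt0 le_uv) w_le le_vw; lia.
Qed.

Lemma push_index_push z : elt z -> exists a, nth (Pop 0) s (push_index s z) = Push a.
Proof.
move=> z_elt; have [lt1 le2] := push_index_bounds z_elt.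
rewrite pushed_succ ?push_index_lt // in le2.
by case: (nth _ _ _) le2 => [a|b] /= le2; [exists a | lia].
Qed.

Hypothesis wf : well_formed s.

Lemma pop_index_lt z : elt z -> pop_index s z < size s.
Proof.
move=> z_elt; have [_ _ Emem Ework _] := run_invariantP wf (leqnn (size s)).
have [_ [_ Etot]] := wf; rewrite pushed_size popped_size -Etot in Ework.
have work0 : work_at s (size s) = [::] by apply/size0nil; lia.
by rewrite -(pop_indexP z (leqnn _)) -[_ \in _]/(z \in [::] ++ _) -work0 Emem pushed_size.
Qed.

Lemma mem_work_at z t : t <= size s -> elt z ->
  (z \in work_at s t) = (push_index s z < t) && (t <= pop_index s z).
Proof.
move=> le_ts z_elt; have [_ Euniq Emem _ _] := run_invariantP wf le_ts.
rewrite (mem_cat_uniq_l z Euniq) Emem (pop_indexP z le_ts) -(push_indexP z_elt le_ts) -leqNgt.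
by case/andP: z_elt => ->.
Qed.

Lemma support_push_take t a :
  nth (Pop 0) s t = Push a -> Defs.support s t = take a (input_at s t).
Proof.
move=> st; rewrite /Defs.support -/(state_at s t) st /input_at.
by case: (state_at s t) => [[]].
Qed.

Lemma support_pop_take t b :
  nth (Pop 0) s t = Pop b -> Defs.support s t = take b (work_at s t).
Proof.
move=> st; rewrite /Defs.support -/(state_at s t) st /work_at.
by case: (state_at s t) => [[]].
Qed.

Lemma mem_support_push t a z : t < size s -> nth (Pop 0) s t = Push a ->
  (z \in Defs.support s t) = elt z && (push_index s z == t).
Proof.
move=> lt_ts st; rewrite (support_push_take st).
have [Ein _ _ _ _] := run_invariantP wf (ltnW lt_ts).
have := pushed_succ lt_ts; rewrite st /= => Epu.
have := pushed_le s t.+1; rewrite Ein drop_iota take_iota mem_iota /opsize => le_n.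
case z_elt: (elt z); last by apply/negbTE; move: z_elt; lia.
by rewrite push_indexE //; lia.
Qed.

Lemma mem_support_pop t b z : t < size s -> nth (Pop 0) s t = Pop b ->
  (z \in Defs.support s t) = elt z && (pop_index s z == t).
Proof.
move=> lt_ts st; rewrite (support_pop_take st).
have [_ _ E3] := pop_step lt_ts st.
have [_ _ Emem _ _] := run_invariantP wf (ltnW lt_ts).
have out_t := pop_indexP z (ltnW lt_ts); have out_t1 := pop_indexP z lt_ts.
rewrite E3 mem_cat in out_t1.
apply/idP/idP => [z_top|].
- have z_work : z \in work_at s t by apply: mem_take z_top.
  have : 0 < z <= pushed s t by rewrite -Emem mem_cat z_work.
  have := pushed_le s t => le_n le_z.
  have z_elt : elt z by lia.
  rewrite z_elt /=; rewrite mem_work_at // in z_work; last exact: ltnW.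
  have : pop_index s z < t.+1 by rewrite -out_t1 z_top.
  lia.
- case/andP=> _ /eqP pz; move: out_t1 out_t; rewrite pz ltnSn ltnn.
  by move=> /orP [// | ->].
Qed.

Lemma pop_index_pop z : elt z -> exists b, nth (Pop 0) s (pop_index s z) = Pop b.
Proof.
move=> z_elt; have lt_zs := pop_index_lt z_elt.
have := pop_indexP z lt_zs; have := pop_indexP z (ltnW lt_zs); rewrite ltnSn ltnn.
case st: (nth _ _ _) => [a|b]; last by exists b.
by have [_ _ ->] := push_step lt_zs st => ->.
Qed.

Lemma push_index_lt_pop_index z : elt z -> push_index s z < pop_index s z.
Proof.
move=> z_elt; have lt_zs := pop_index_lt z_elt; have [b st] := pop_index_pop z_elt.
have := mem_support_pop z lt_zs st; rewrite z_elt eqxx (support_pop_take st) => /mem_take.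
by rewrite mem_work_at ?(ltnW lt_zs) // => /andP [].
Qed.

Lemma push_index_neq_pop_index u v : elt u -> elt v -> push_index s u <> pop_index s v.
Proof.
move=> u_elt v_elt E; have [a st_a] := push_index_push u_elt.
by have [b] := pop_index_pop v_elt; rewrite -E st_a.
Qed.

End Indices.

(** * Stack orders *)

(* [above s u v]: whenever u and v are both on the working stack, u is nearer
   the top.  [before s u v]: u is nearer the top of the final output stack. *)
Definition above (s : seq op) (u v : nat) : bool :=
  (push_index s v < push_index s u) || (push_index s u == push_index s v) && (u < v).
Definition before (s : seq op) (u v : nat) : bool :=
  (pop_index s v < pop_index s u) || (pop_index s u == pop_index s v) && above s u v.

Lemma before_asym s u v : before s u v -> ~~ before s v u.
Proof. rewrite /before /above; lia. Qed.

Section Stacks.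
Variable s : seq op.
Hypothesis wf : well_formed s.
Local Notation elt z := (0 < z <= pushes s).

Lemma work_at_above t : t <= size s -> pairwise (above s) (work_at s t).
Proof.
elim: t => [|t IH] le_ts; first by rewrite /work_at /state_at take0.
have lt_ts : t < size s by [].
have [Ein _ Emem _ _] := run_invariantP wf (ltnW lt_ts).
case st: (nth (Pop 0) s t) => [a|b].
- have [_ -> _] := push_step lt_ts st.
  have mem_block z : (z \in take a (input_at s t)) = elt z && (push_index s z == t).
    by rewrite -(support_push_take st) (mem_support_push wf _ lt_ts st).
  rewrite pairwise_cat IH ?andbT; last exact: ltnW.
  apply/andP; split.
  + apply/allrelP => u v u_block v_work; move: u_block; rewrite mem_block => /andP [_ /eqP pu].
    have : 0 < v <= pushed s t by rewrite -Emem mem_cat v_work.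
    have := pushed_le s t => le_n le_v.
    by rewrite mem_work_at ?(ltnW lt_ts) // in v_work; rewrite /above; lia.
  + rewrite Ein drop_iota take_iota; apply: pairwise_iota => u v le_u lt_uv lt_v.
    have := pushed_le s t.+1; rewrite pushed_succ // st /= /opsize => le_n.
    have /andP [_ /eqP pu] : elt u && (push_index s u == t).
      by rewrite -mem_block Ein drop_iota take_iota mem_iota /opsize; lia.
    have /andP [_ /eqP pv] : elt v && (push_index s v == t).
      by rewrite -mem_block Ein drop_iota take_iota mem_iota /opsize; lia.
    by rewrite /above pu pv eqxx lt_uv orbT.
- have [_ -> _] := pop_step lt_ts st.
  move: (IH (ltnW lt_ts)); rewrite -{1}(cat_take_drop b (work_at s t)) pairwise_cat.
  by case/and3P.
Qed.

Lemma output_at_before t : t <= size s -> pairwise (before s) (output_at s t).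
Proof.
elim: t => [|t IH] le_ts; first by rewrite output_at0.
have lt_ts : t < size s by [].
case st: (nth (Pop 0) s t) => [a|b]; first by have [_ _ ->] := push_step lt_ts st; apply: IH; lia.
have [_ _ ->] := pop_step lt_ts st.
have mem_top z : (z \in take b (work_at s t)) = elt z && (pop_index s z == t).
  by rewrite -(support_pop_take st) (mem_support_pop wf _ lt_ts st).
rewrite pairwise_cat IH ?andbT; last exact: ltnW.
apply/andP; split.
- apply/allrelP => u v u_top; rewrite (pop_indexP v (ltnW lt_ts)) => pv.
  move: u_top; rewrite mem_top => /andP [_ /eqP pu].
  by rewrite /before pu pv.
- move: (work_at_above (ltnW lt_ts)).
  rewrite -{1}(cat_take_drop b (work_at s t)) pairwise_cat => /and3P [_ top_above _].
  apply: (sub_in_pairwise (P := fun z => pop_index s z == t)) top_above.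
  + by move=> u v /eqP pu /eqP pv uv; rewrite /before pu pv eqxx ltnn.
  + by apply/allP => z; rewrite mem_top => /andP [].
Qed.

Lemma index_lt_pairwise (T : eqType) (r : rel T) (l : seq T) u v :
  pairwise r l -> u \in l -> v \in l -> index u l < index v l -> r u v.
Proof.
move/(pairwiseP u) => pr u_l v_l lt_uv.
by have := pr _ _ _ _ lt_uv; rewrite !inE !index_mem !nth_index //; apply.
Qed.

Lemma index_lt_pairwise_asym (T : eqType) (r : rel T) (l : seq T) u v :
  pairwise r l -> u \in l -> v \in l -> u != v -> ~~ r v u -> index u l < index v l.
Proof.
move=> pr u_l v_l neq_uv r_vu; case: ltngtP => // [lt_vu|eq_uv].
- by rewrite (index_lt_pairwise pr v_l u_l lt_vu) in r_vu.
- by move: neq_uv; rewrite -(nth_index u u_l) eq_uv nth_index // eqxx.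
Qed.

Lemma lifo u v : elt u -> elt v -> above s u v -> push_index s u < pop_index s v ->
  pop_index s u <= pop_index s v.
Proof.
move=> u_elt v_elt uv lt_pu_ov; rewrite leqNgt; apply/negP => lt_ov_ou.
set t := pop_index s v in lt_pu_ov lt_ov_ou.
have lt_ts := pop_index_lt wf v_elt; have [b st] := pop_index_pop wf v_elt.
have mem_top z : (z \in take b (work_at s t)) = elt z && (pop_index s z == t).
  by rewrite -(support_pop_take st) (mem_support_pop wf _ lt_ts st).
have v_top : v \in take b (work_at s t) by rewrite mem_top v_elt eqxx.
have v_work : v \in work_at s t by apply: mem_take v_top.
have u_work : u \in work_at s t by rewrite mem_work_at // ?(ltnW lt_ts) // lt_pu_ov; lia.
have neq_uv : u != v by apply/eqP => eq_uv; move: uv; rewrite eq_uv /above; lia.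
have lt_idx : index u (work_at s t) < index v (work_at s t).
  apply: index_lt_pairwise_asym (work_at_above (ltnW lt_ts)) _ _ _ _ => //.
  by move: uv; rewrite /above; lia.
have : u \in take b (work_at s t).
  by rewrite in_take //; rewrite in_take // in v_top; apply: ltn_trans lt_idx v_top.
by rewrite mem_top => /andP [_ /eqP]; lia.
Qed.

Lemma produced_output s' : produced s' = output_at s' (size s').
Proof. by rewrite /produced /output_at /state_at take_size. Qed.

Lemma mem_produced z : elt z -> z \in produced s.
Proof. by move=> z_elt; rewrite produced_output (pop_indexP z (leqnn _)) pop_index_lt. Qed.

Lemma before_index u v : before s u v -> u \in produced s -> v \in produced s ->
  index u (produced s) < index v (produced s).
Proof.
move=> uv u_out v_out; rewrite produced_output in u_out v_out *.
apply: index_lt_pairwise_asym (output_at_before (leqnn _)) _ _ _ (before_asym uv) => //.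
by apply/eqP => eq_uv; move: uv; rewrite eq_uv /before /above; lia.
Qed.

Lemma index_before u v : u \in produced s -> v \in produced s ->
  index u (produced s) < index v (produced s) -> before s u v.
Proof. by rewrite produced_output; apply/index_lt_pairwise/output_at_before. Qed.

End Stacks.

(* The output order, hence [before], is determined by the produced permutation. *)
Lemma equivalent_before s1 s2 u v : equivalent s1 s2 ->
  0 < u <= pushes s1 -> 0 < v <= pushes s1 -> before s1 u v -> before s2 u v.
Proof.
move=> [wf1 [wf2 [_ Eprod]]] u_elt v_elt uv.
have := before_index wf1 uv (mem_produced wf1 u_elt) (mem_produced wf1 v_elt).
rewrite Eprod; apply: index_before; rewrite // -Eprod; exact: mem_produced.
Qed.

Lemma equivalent_sym s1 s2 : equivalent s1 s2 -> equivalent s2 s1.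
Proof. by move=> [wf1 [wf2 [Esize Eprod]]]. Qed.

Lemma foldl_vstep c d l :
  foldl vstep (c, d) l = (c + pushes l + pops l, (d + (pushes l)%:Z - (pops l)%:Z)%R).
Proof.
elim: l c d => [|[a|b] l IH] c d /=.
- by rewrite /pushes /pops /= !addn0 GRing.addr0 GRing.subr0.
- by rewrite IH /pushes /pops /=; congr pair; rewrite ?PoszD; lia.
- by rewrite IH /pushes /pops /=; congr pair; rewrite ?PoszD; lia.
Qed.

Lemma vertexE s k :
  vertex s k = (pushed s k + popped s k, ((pushed s k)%:Z - (popped s k)%:Z)%R).
Proof. by rewrite /vertex foldl_vstep /pushed /popped GRing.add0r. Qed.

(** * Consequences of the stack discipline *)

Section Discipline.
Variable s : seq op.
Hypothesis wf : well_formed s.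
Local Notation elt z := (0 < z <= pushes s).

Lemma push_index_ltW u v : 0 < v -> u <= pushes s -> push_index s u < push_index s v -> u < v.
Proof. by move=> v_gt0 u_le; apply: contraTT; rewrite -!leqNgt; apply: push_index_mono. Qed.

Lemma before_between u w v : 0 < u -> v <= pushes s -> u < w < v ->
  push_index s u = push_index s v -> pop_index s u = pop_index s v -> before s w v.
Proof.
move=> u_gt0 v_le /andP [lt_uw lt_wv] Epush Epop.
have le1 := push_index_mono (s := s) u_gt0 (_ : w <= pushes s) (ltnW lt_uw).
have le2 := push_index_mono (s := s) (_ : 0 < w) v_le (ltnW lt_wv).
have [u_elt w_elt v_elt] : [/\ elt u, elt w & elt v] by split; lia.
have := push_index_lt_pop_index wf w_elt; have := push_index_lt_pop_index wf v_elt.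
have := lifo wf u_elt w_elt; have := lifo wf w_elt v_elt.
rewrite /before /above; lia.
Qed.

Lemma popped_count t : t <= size s ->
  popped s t = count (fun z => pop_index s z < t) (iota 1 (pushes s)).
Proof.
move=> le_ts; have [_ Euniq Emem _ <-] := run_invariantP wf le_ts.
rewrite -size_filter; apply/perm_size/uniq_perm.
- by move: Euniq; rewrite cat_uniq => /and3P [].
- exact/filter_uniq/iota_uniq.
- move=> z; rewrite mem_filter mem_iota -(pop_indexP z le_ts).
  have := pushed_le s t; have := Emem z; rewrite mem_cat.
  by case: (z \in output_at s t); rewrite ?orbT /=; lia.
Qed.

Lemma corresponds_elt i j : i < size s -> corresponds s i j ->
  exists z, [/\ elt z, push_index s z = i & pop_index s z = j].
Proof.
move=> lt_is [push_i [pop_j [lt_js [z [z_i z_j]]]]].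
case st_i: (nth _ _ i) push_i => [a|] // _; case st_j: (nth _ _ j) pop_j => [|b] // _.
move: z_i z_j; rewrite (mem_support_push wf _ lt_is st_i) (mem_support_pop wf _ lt_js st_j).
by case/andP=> z_elt /eqP ? /andP [_ /eqP ?]; exists z.
Qed.

Lemma corresponds_pop_index i z : i < size s -> is_push (nth (Pop 0) s i) ->
  elt z -> push_index s z = i -> corresponds s i (pop_index s z).
Proof.
move=> lt_is push_i z_elt pz; have lt_zs := pop_index_lt wf z_elt.
have [b st_b] := pop_index_pop wf z_elt.
case st_a: (nth _ _ i) push_i => [a|] // _.
rewrite /corresponds st_a st_b; do 3 (split=> //); exists z.
by rewrite (mem_support_push wf _ lt_is st_a) (mem_support_pop wf _ lt_zs st_b) z_elt pz !eqxx.
Qed.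

Lemma push1_pop1 F : 0 < F < size s ->
  nth (Pop 0) s F.-1 = Push 1 -> nth (Pop 0) s F = Pop 1 ->
  [/\ elt (pushed s F), push_index s (pushed s F) = F.-1 &
      forall z, elt z -> (pop_index s z == F) = (z == pushed s F)].
Proof.
move=> /andP [F_gt0 lt_Fs] st1 st2; have lt_F1s : F.-1 < size s by lia.
have EF : F.-1.+1 = F by lia.
have Epu := pushed_succ lt_F1s; rewrite st1 EF /= in Epu.
have le_n := pushed_le s F.
have d_elt : elt (pushed s F) by lia.
have [Ein _ _ _ _] := run_invariantP wf (ltnW lt_F1s).
have [_ Ework _] := push_step lt_F1s st1; rewrite EF in Ework.
have top : Defs.support s F = [:: pushed s F].
  rewrite (support_pop_take st2) Ework Ein drop_iota take_iota /opsize.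
  by rewrite (_ : minn 1 _ = 1) /= ?take0 ?Epu ?add1n ?addn1 //; lia.
split=> // [|z z_elt].
- by apply/eqP; rewrite push_indexE // EF; lia.
- by rewrite -(mem_seq1 z) -top (mem_support_pop wf _ lt_Fs st2) z_elt.
Qed.

Hypothesis red : reduced s.

Lemma first_pop_after i j : i < j < size s -> 1 < push_size (nth (Pop 0) s i) ->
  is_pop (nth (Pop 0) s j) ->
  exists F, [/\ i.+1 < F < size s, nth (Pop 0) s F.-1 = Push 1, nth (Pop 0) s F = Pop 1
              & forall t, i < t < F -> is_push (nth (Pop 0) s t)].
Proof.
move=> /andP [lt_ij lt_js] big_i pop_j.
pose P F := (i < F < size s) && is_pop (nth (Pop 0) s F).
have [|F /andP [/andP [lt_iF lt_Fs] pop_F] min_F] := ex_minnP (ex_intro P j _).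
  by rewrite /P lt_ij lt_js pop_j.
have push_before t : i < t < F -> is_push (nth (Pop 0) s t).
  move=> /andP [lt_it lt_tF]; apply: contraTT (lt_tF) => pop_t.
  rewrite -leqNgt; apply: min_F; rewrite /P lt_it (ltn_trans lt_tF lt_Fs) /=.
  by case: (nth _ _ t) pop_t.
have [a st_i] : exists a, nth (Pop 0) s i = Push a.
  by case: (nth _ _ i) big_i => [a|] //; exists a.
have pair F' : F'.+1 < size s -> is_push (nth (Pop 0) s F') -> is_pop (nth (Pop 0) s F'.+1) ->
  nth (Pop 0) s F' = Push 1 /\ nth (Pop 0) s F'.+1 = Pop 1.
  exact: red.
have lt_i1F : i.+1 < F.
  case: (ltngtP i.+1 F) => // [lt_Fi1|eq_F]; first lia.
  have [st_i1 _] := pair i ltac:(lia) ltac:(by rewrite st_i) ltac:(by rewrite eq_F).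
  by move: big_i; rewrite st_i1.
have [st1 st2] : nth (Pop 0) s F.-1 = Push 1 /\ nth (Pop 0) s F = Pop 1.
  have := pair F.-1; rewrite prednK; last lia.
  by apply=> //; apply: push_before; lia.
by exists F; split=> //; lia.
Qed.

End Discipline.

(** * A push whose corresponding pops are not consecutive *)

Lemma exists_crossing (f : nat -> nat) a c k : a <= c -> f a < k <= f c ->
  exists y, [/\ a <= y, y < c, f y < k & k <= f y.+1].
Proof.
elim: c => [|c IH] le_ac /andP [lt_fa le_fc].
  by move: le_ac lt_fa; rewrite leqn0 => /eqP ->; lia.
case: (ltnP c a) => [lt_ca|le_ac'].
  by have ac : a = c.+1; [lia | move: lt_fa; rewrite ac; lia].
case: (ltnP (f c) k) => [lt_fc|le_k]; first by exists c.
by have [y [*]] := IH le_ac' ltac:(lia); exists y; split=> //; lia.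
Qed.

Lemma noncontiguous_pops_gap s i : well_formed s -> i < size s -> is_push (nth (Pop 0) s i) ->
  (exists j1 k j2, j1 < k < j2 /\
     corresponds s i j1 /\ corresponds s i j2 /\ ~ corresponds s i k) ->
  exists y, [/\ 0 < y, y.+1 <= pushes s, push_index s y = i, push_index s y.+1 = i
              & (pop_index s y).+1 < pop_index s y.+1].
Proof.
move=> wf lt_is push_i [j1 [k [j2 [/andP [lt_j1k lt_kj2] [c1 [c2 not_ck]]]]]].
have [z1 [z1_elt push_z1 pop_z1]] := corresponds_elt wf lt_is c1.
have [z2 [z2_elt push_z2 pop_z2]] := corresponds_elt wf lt_is c2.
have le_z12 : z1 <= z2.
  rewrite leqNgt; apply/negP => lt_z21.
  have := lifo wf z2_elt z1_elt; have := push_index_lt_pop_index wf z1_elt.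
  rewrite /above; lia.
have [y [le_z1y lt_yz2 lt_yk le_ky1]] :=
  exists_crossing (f := pop_index s) (k := k) le_z12 ltac:(lia).
have push_block v : z1 <= v <= z2 -> push_index s v = i.
  by move=> le_v; rewrite -push_z1; apply: (push_index_between (w := z2)); lia.
exists y; split; try lia; try by apply: push_block; lia.
suff : k < pop_index s y.+1 by lia.
rewrite ltn_neqAle le_ky1 andbT; apply/eqP => eq_k; apply: not_ck; rewrite eq_k.
by apply: corresponds_pop_index => //; [lia | apply: push_block; lia].
Qed.

Section FixedPush.
Variables (alpha : seq op) (i y : nat).
Hypotheses (wfa : well_formed alpha) (reda : reduced alpha) (lt_i : i < size alpha).
Hypotheses (y_gt0 : 0 < y) (y1_le : y.+1 <= pushes alpha).
Hypotheses (push_y : push_index alpha y = i) (push_y1 : push_index alpha y.+1 = i).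
Hypothesis gap : (pop_index alpha y).+1 < pop_index alpha y.+1.

Local Notation elt z := (0 < z <= pushes alpha).
Local Notation pushA := (push_index alpha).
Local Notation popA := (pop_index alpha).
Let x := pushed alpha i.
Let X := pushed alpha i.+1.

Lemma y_elt : elt y. Proof. lia. Qed.
Lemma y1_elt : elt y.+1. Proof. lia. Qed.

Lemma block_i z : elt z -> (pushA z == i) = (x < z <= X).
Proof. by move=> z_elt; rewrite push_indexE. Qed.

Lemma y_in_block : x < y /\ y.+1 <= X.
Proof. by have := block_i y_elt; have := block_i y1_elt; rewrite push_y push_y1 eqxx; lia. Qed.

Lemma i_lt_pop_y : i < popA y.
Proof. by rewrite -{1}push_y; apply: push_index_lt_pop_index y_elt. Qed.

Lemma first_pop_after_i : exists F, [/\ i.+1 < F < size alpha, nth (Pop 0) alpha F.-1 = Push 1,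
  nth (Pop 0) alpha F = Pop 1 & forall t, i < t < F -> is_push (nth (Pop 0) alpha t)].
Proof.
have [b st_b] := pop_index_pop wfa y_elt.
apply: (first_pop_after reda (j := popA y)); last by rewrite st_b.
  by rewrite i_lt_pop_y pop_index_lt //; apply: y_elt.
have := pushed_succ lt_i; have := y_in_block; rewrite -/x -/X; lia.
Qed.

Lemma exists_pop_before_y1 : exists g, elt g /\ popA g = (popA y.+1).-1.
Proof.
have lt_s : (popA y.+1).-1 < size alpha by have := pop_index_lt wfa y1_elt; lia.
have [b1 st_y1] := pop_index_pop wfa y1_elt.
case st: (nth (Pop 0) alpha (popA y.+1).-1) => [a|b].
- have gt0 : 0 < popA y.+1 by lia.
  have [st1 st2] := @reda ((popA y.+1).-1)
    ltac:(rewrite prednK //; exact: pop_index_lt y1_elt) ltac:(by rewrite st)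
    ltac:(by rewrite prednK ?st_y1).
  rewrite prednK // in st2.
  have [_ push_d pop_d] := push1_pop1 wfa (F := popA y.+1)
    ltac:(rewrite gt0 pop_index_lt //; exact: y1_elt) st1 st2.
  have := pop_d _ y1_elt; rewrite eqxx => /esym/eqP y1_d.
  by move: push_d; rewrite -y1_d push_y1; have := i_lt_pop_y; lia.
- have b_gt0 := op_size_gt0 wfa lt_s; rewrite st /= in b_gt0.
  have le_b := pop_size_le_work wfa lt_s st.
  set g := nth 0 (take b (work_at alpha (popA y.+1).-1)) 0.
  have : g \in Defs.support alpha (popA y.+1).-1.
    rewrite (support_pop_take st); apply: mem_nth.
    by rewrite size_take_min leq_min b_gt0 (leq_trans b_gt0 le_b).
  by rewrite (mem_support_pop wfa _ lt_s st) => /andP [g_elt /eqP pop_g]; exists g.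
Qed.

Variable F : nat.
Hypotheses (lt_F : i.+1 < F < size alpha) (st_F1 : nth (Pop 0) alpha F.-1 = Push 1).
Hypotheses (st_F : nth (Pop 0) alpha F = Pop 1).
Hypothesis push_before_F : forall t, i < t < F -> is_push (nth (Pop 0) alpha t).

Let e := pushed alpha F.

Lemma e_sigma_tau : [/\ elt e, pushA e = F.-1 & forall z, elt z -> (popA z == F) = (z == e)].
Proof. by apply: push1_pop1 => //; lia. Qed.

Lemma pop_after_i_ge_F z : elt z -> i < popA z -> F <= popA z.
Proof.
move=> z_elt lt_iz; rewrite leqNgt; apply/negP => lt_zF.
have [b st] := pop_index_pop wfa z_elt.
by have := push_before_F (t := popA z); rewrite st => /(_ ltac:(lia)).
Qed.

Lemma F_lt_pop_y : F < popA y.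
Proof.
have [_ push_e pop_e] := e_sigma_tau.
have := pop_after_i_ge_F y_elt i_lt_pop_y.
case: ltngtP => // eq_F _; have := pop_e _ y_elt; rewrite -eq_F eqxx => /esym/eqP y_e.
by move: push_e; rewrite -y_e push_y; lia.
Qed.

Let w := X.+1.

Lemma w_next_block : [/\ elt w, pushA w = i.+1 & popA w <= popA y].
Proof.
have lt_i1 : i.+1 < size alpha by lia.
have := op_size_gt0 wfa lt_i1; have := push_before_F (t := i.+1) ltac:(lia).
case st: (nth _ _ i.+1) => [a|] //= _ a_gt0.
have := pushed_succ lt_i1; have := pushed_le alpha i.+2; rewrite st /= -/X => le_n Epu.
have w_elt : elt w by rewrite /w; lia.
have push_w : pushA w = i.+1 by apply/eqP; rewrite push_indexE // -/X; lia.
split=> //; apply: lifo w_elt y_elt _ _ => //; rewrite ?push_w /above ?push_y //.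
all: by have := F_lt_pop_y; lia.
Qed.

Variable g : nat.
Hypotheses (g_elt : elt g) (pop_g : popA g = (popA y.+1).-1).

Lemma pop_y_lt_push_g : popA y < pushA g.
Proof.
have push_lt := push_index_lt_pop_index wfa g_elt.
have neq := push_index_neq_pop_index wfa g_elt y_elt.
have := i_lt_pop_y => lt_iy.
have i_lt : i < pushA g.
  case: (ltngtP (pushA g) i) => // push_g.
  - by have := lifo wfa y1_elt g_elt; rewrite /above push_y1; lia.
  - case: (ltngtP g y.+1) => [lt_g|lt_g|eq_g]; last by move: pop_g; rewrite eq_g; lia.
    + have neq_gy : g != y by apply/eqP => eq_g; move: pop_g; rewrite eq_g; lia.
      by have := lifo wfa g_elt y_elt; rewrite /above push_g push_y; lia.
    + by have := lifo wfa y1_elt g_elt; rewrite /above push_g push_y1; lia.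
case: (ltngtP (pushA g) (popA y)) => // lt_g.
by have := lifo wfa g_elt y_elt; rewrite /above push_y; lia.
Qed.

Lemma w_lt_g : w < g.
Proof.
have [w_elt push_w _] := w_next_block; have := pop_y_lt_push_g; have := F_lt_pop_y.
by move=> *; apply: (push_index_ltW (s := alpha)); lia.
Qed.

Lemma X_elt : elt X.
Proof. by have := pushed_le alpha i.+1; have := y_in_block; rewrite -/X; lia. Qed.

Lemma push_X : pushA X = i.
Proof. by apply/eqP; rewrite block_i ?X_elt //; have := y_in_block; lia. Qed.

Lemma X_lt_e : X < e.
Proof.
have [e_elt push_e _] := e_sigma_tau; have Xe := X_elt.
by apply: (push_index_ltW (s := alpha)); rewrite ?push_e ?push_X; lia.
Qed.

Lemma pop_x1_le_pop_y : popA x.+1 <= popA y.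
Proof.
have [lt_xy _] := y_in_block; have x1_elt : elt x.+1 by lia.
have /eqP push_x1 : pushA x.+1 == i by rewrite block_i //; have := y_in_block; lia.
case: (ltngtP x.+1 y) => [lt_x1y||<-] //; last lia.
by apply: lifo x1_elt y_elt _ _; rewrite /above ?push_x1 ?push_y ?eqxx ?lt_x1y ?orbT ?i_lt_pop_y.
Qed.

Lemma pop_y1_le_pop_X : popA y.+1 <= popA X.
Proof.
have [_ le_y1X] := y_in_block; case: (ltngtP y.+1 X) => [lt_y1X|//|->] //; last lia.
have := push_index_lt_pop_index wfa X_elt; rewrite push_X => lt_iX.
by apply: lifo y1_elt X_elt _ _; rewrite /above ?push_y1 ?push_X ?eqxx ?lt_y1X ?orbT.
Qed.

Variable beta : seq op.
Hypotheses (wfb : well_formed beta) (redb : reduced beta) (eqab : equivalent alpha beta).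

Local Notation pushB := (push_index beta).
Local Notation popB := (pop_index beta).

Lemma pushes_beta : pushes beta = pushes alpha.
Proof. by case: eqab => _ [_ [Esize _]]. Qed.

Lemma eltB z : elt z -> 0 < z <= pushes beta.
Proof. by rewrite pushes_beta. Qed.

Lemma before_beta u v : elt u -> elt v -> popA v < popA u -> before beta u v.
Proof.
by move=> u_elt v_elt lt_vu; apply: equivalent_before eqab u_elt v_elt _; rewrite /before lt_vu.
Qed.

Lemma pop_g_lt_pop_y1_beta : popB g < popB y.+1.
Proof.
have := pop_y_lt_push_g; have := push_index_lt_pop_index wfa g_elt => *.
have bef_y1_g := before_beta y1_elt g_elt ltac:(lia).
have [w_elt _ pop_w] := w_next_block; have bef_g_w := before_beta g_elt w_elt ltac:(lia).
have lt_wg : X.+1 < g := w_lt_g; have [_ le_y1X] := y_in_block.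
have /andP [_ g_le] := eltB g_elt.
have mono := push_index_mono (s := beta) (u := y.+1) (v := g) isT g_le ltac:(lia).
rewrite ltnNge; apply/negP => le_pop.
have [eq_push eq_pop] : pushB y.+1 = pushB g /\ popB y.+1 = popB g.
  by move: bef_y1_g; rewrite /before /above; lia.
have := before_between wfb (u := y.+1) (w := w) isT g_le ltac:(rewrite /w; lia) eq_push eq_pop.
by rewrite (negbTE (before_asym bef_g_w)).
Qed.

Lemma pop_order_alpha :
  [/\ popA y < popA g, popA g < popA y.+1, popA e < popA y & popA y < popA X].
Proof.
have [e_elt _ pop_e] := e_sigma_tau; have := pop_e _ e_elt; rewrite eqxx => /eqP ->.
have := F_lt_pop_y; have := pop_y1_le_pop_X; have := push_index_lt_pop_index wfa g_elt.
have := pop_y_lt_push_g; split; lia.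
Qed.

Lemma push_y_y1_beta : pushB y = pushB y.+1.
Proof.
have [e_elt _ _] := e_sigma_tau; have [lt_yg lt_gy1 lt_ey lt_yX] := pop_order_alpha.
have bef_y1_y := before_beta y1_elt y_elt ltac:(lia).
have bef_g_y := before_beta g_elt y_elt lt_yg.
have bef_y_e := before_beta y_elt e_elt lt_ey.
have lt_gy1B := pop_g_lt_pop_y1_beta.
have yB := eltB y_elt; have y1B := eltB y1_elt; have eB := eltB e_elt.
have := push_index_mono (s := beta) (u := y) (v := y.+1) y_gt0 ltac:(lia) (leqnSn y).
have lt_y1e : y.+1 < e by have := X_lt_e; have := y_in_block; lia.
have := push_index_mono (s := beta) (u := y.+1) (v := e) isT ltac:(lia) (ltnW lt_y1e).
have := push_index_neq_pop_index wfb y1B yB; have := push_index_lt_pop_index wfb eB.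
have := lifo wfb y1B yB; move: bef_y1_y bef_g_y bef_y_e; rewrite /before /above; lia.
Qed.

Lemma pop_y_lt_pop_y1_beta : popB y < popB y.+1.
Proof.
have bef_y1_y := before_beta y1_elt y_elt ltac:(lia).
by move: bef_y1_y push_y_y1_beta; rewrite /before /above; lia.
Qed.

Lemma e_beta : pushB y < pushB e /\ popB e < popB y.
Proof.
have [e_elt _ _] := e_sigma_tau; have [_ _ lt_ey _] := pop_order_alpha.
have bef_y_e := before_beta y_elt e_elt lt_ey.
have y1B := eltB y1_elt; have eB := eltB e_elt.
have lt_y1e : y.+1 < e by have := X_lt_e; have := y_in_block; lia.
have := push_index_mono (s := beta) (u := y.+1) (v := e) isT ltac:(lia) (ltnW lt_y1e).
have := push_index_lt_pop_index wfb eB; have := lifo wfb y1B eB.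
have := push_y_y1_beta; have := pop_y_lt_pop_y1_beta.
move: bef_y_e; rewrite /before /above; lia.
Qed.

(* Otherwise the sigma tau pair that first pops after the push of y in beta
   pops an element d > y before z; in alpha this forces d to be pushed before
   i, i.e. d <= x < y. *)
Lemma block_y_beta_pop_late z : elt z -> pushB z = pushB y -> i <= popA z.
Proof.
move=> z_elt push_z; rewrite leqNgt; apply/negP => lt_zi.
have zB := eltB z_elt; have yB := eltB y_elt; have y1B := eltB y1_elt.
have [b st_b] := pop_index_pop wfb yB.
have big : 1 < push_size (nth (Pop 0) beta (pushB y)).
  have := push_index_bounds y1B; have := push_index_bounds yB.
  rewrite -push_y_y1_beta pushed_succ ?push_index_lt //; lia.
have [F' [lt_F' st1 st2 push_before']] := first_pop_after redb (i := pushB y) (j := popB y)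
  ltac:(by rewrite push_index_lt_pop_index ?pop_index_lt) big ltac:(by rewrite st_b).
have [d_elt push_d pop_d] := push1_pop1 wfb (F := F') ltac:(lia) st1 st2.
set d := pushed beta F' in d_elt push_d pop_d.
have le_F' : F' <= popB z.
  rewrite leqNgt; apply/negP => lt_z; have [c st_c] := pop_index_pop wfb zB.
  have := push_index_lt_pop_index wfb zB.
  by have := push_before' (popB z); rewrite st_c push_z => /[swap] ? /(_ ltac:(lia)).
have pop_dF : popB d = F' by apply/eqP; rewrite pop_d ?eqxx.
have neq_zd : z != d by apply/eqP => eq_zd; move: push_d; rewrite -eq_zd push_z; lia.
have := pop_d z zB; rewrite (negbTE neq_zd) => /negbT neq_F'.
have := equivalent_before (equivalent_sym eqab) zB d_elt.
rewrite /before pop_dF ltn_neqAle le_F' eq_sym neq_F' /= => /(_ isT) dz.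
rewrite pushes_beta in d_elt; have := push_index_lt_pop_index wfa d_elt.
have := push_indexP d_elt (ltnW lt_i); rewrite -/x => Ed.
have := push_index_ltW (s := beta) (u := y) (v := d) ltac:(lia) ltac:(lia) ltac:(lia).
have [lt_xy _] := y_in_block; move: dz Ed; rewrite /above; lia.
Qed.

Lemma low_block_y_beta_pop_early z : 0 < z <= x -> pushB z = pushB y -> popA z <= i.
Proof.
move=> z_x push_z; rewrite leqNgt; apply/negP => lt_iz.
have [lt_xy _] := y_in_block; have := pushed_le alpha i; rewrite -/x => le_x.
have z_elt : elt z by lia.
have zB := eltB z_elt; have yB := eltB y_elt; have gB := eltB g_elt.
have push_zA : pushA z < i by rewrite -(push_indexP z_elt (ltnW lt_i)); lia.
have L1 := lifo wfa y1_elt z_elt ltac:(by rewrite /above push_y1 push_zA) ltac:(by rewrite push_y1).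
have [lt_yg lt_gy1 _ _] := pop_order_alpha.
have bef_z_g := before_beta z_elt g_elt ltac:(lia).
have bef_g_y := before_beta g_elt y_elt lt_yg.
have L2 := lifo wfb zB yB ltac:(rewrite /above push_z eqxx; lia)
  ltac:(by rewrite push_z push_index_lt_pop_index).
have lt_yg' : y < g by have := w_lt_g; have := y_in_block; rewrite /w; lia.
have := push_index_mono (s := beta) (u := y) (v := g) y_gt0 ltac:(lia) (ltnW lt_yg').
move: bef_z_g bef_g_y; rewrite /before /above; lia.
Qed.

Lemma push_low_beta z : 0 < z <= x -> pushB z < pushB y.
Proof.
move=> z_x; have [lt_xy _] := y_in_block; have := pushed_le alpha i; rewrite -/x => le_x.
have z_elt : elt z by lia.
have yB := eltB y_elt.
have := push_index_mono (s := beta) (u := z) (v := y) ltac:(lia) ltac:(lia) ltac:(lia).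
rewrite leq_eqVlt => /orP [/eqP push_z|//].
have := block_y_beta_pop_late z_elt push_z; have := low_block_y_beta_pop_early z_x push_z.
by have := push_index_neq_pop_index wfa y_elt z_elt; rewrite push_y; lia.
Qed.

Lemma pop_beta_lt_of_alpha z : elt z -> popA z < i -> popB z < pushB y.
Proof.
move=> z_elt lt_zi; have zB := eltB z_elt; have yB := eltB y_elt.
have [e_elt _ pop_e] := e_sigma_tau; have := pop_e _ e_elt; rewrite eqxx => /eqP pop_eF.
have := push_index_lt_pop_index wfa z_elt => lt_push_z.
have := push_indexP z_elt (ltnW lt_i); rewrite -/x => Ez.
have push_z := push_low_beta (z := z) ltac:(lia).
have bef_e_z := before_beta e_elt z_elt ltac:(lia).
have [_ lt_ey] := e_beta.
have := push_index_neq_pop_index wfb yB zB.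
have := lifo wfb yB zB ltac:(by rewrite /above push_z).
move: bef_e_z; rewrite /before /above; lia.
Qed.

Lemma pop_alpha_lt_of_beta z : elt z -> popB z < pushB y -> popA z < i.
Proof.
move=> z_elt lt_zy; have zB := eltB z_elt.
have [e_elt _ pop_e] := e_sigma_tau; have := pop_e _ e_elt; rewrite eqxx => /eqP pop_eF.
have [lt_ye lt_ey] := e_beta; have lt_e := push_index_lt_pop_index wfb (eltB e_elt).
rewrite ltnNge; apply/negP => le_iz.
have := push_index_neq_pop_index wfa y_elt z_elt; rewrite push_y => neq_iz.
have le_Fz := pop_after_i_ge_F z_elt ltac:(lia).
case: (ltngtP F (popA z)) le_Fz => // [lt_Fz|eq_Fz] _.
- have bef_z_e := before_beta z_elt e_elt ltac:(lia).
  by move: bef_z_e; rewrite /before /above; lia.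
- have := pop_e _ z_elt; rewrite eq_Fz eqxx => /esym /eqP eq_ze.
  by move: lt_zy; rewrite eq_ze; lia.
Qed.

Lemma push_x1_beta : pushB x.+1 = pushB y.
Proof.
have [lt_xy _] := y_in_block.
have x1_elt : elt x.+1 by lia.
have x1B := eltB x1_elt; have y1B := eltB y1_elt.
have /eqP push_x1 : pushA x.+1 == i by rewrite block_i //; have := y_in_block; lia.
have := push_index_mono (s := beta) (u := x.+1) (v := y) isT ltac:(lia) lt_xy.
rewrite leq_eqVlt => /orP [/eqP //|lt_x1].
have := push_index_lt_pop_index wfa x1_elt; rewrite push_x1 => lt_ix1.
have not_early : ~~ (popB x.+1 < pushB y).
  by apply/negP => /(pop_alpha_lt_of_beta x1_elt); lia.
have := push_index_neq_pop_index wfb (eltB y_elt) x1B.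
have := lifo wfb y1B x1B ltac:(by rewrite /above -push_y_y1_beta lt_x1).
rewrite -push_y_y1_beta => /[swap] neq /(_ ltac:(lia)) le_pop.
have [lt_yg lt_gy1 _ _] := pop_order_alpha.
have bef_g_x1 := before_beta g_elt x1_elt ltac:(have := pop_x1_le_pop_y; lia).
have lt_gy1B := pop_g_lt_pop_y1_beta.
by move: (before_asym bef_g_x1); rewrite /before; lia.
Qed.

Lemma push_w_beta : pushB y < pushB w.
Proof.
have [w_elt _ pop_w] := w_next_block; have wB := eltB w_elt; have y1B := eltB y1_elt.
have [_ le_y1X] := y_in_block.
have := push_index_mono (s := beta) (u := y.+1) (v := w) isT ltac:(lia) ltac:(rewrite /w; lia).
rewrite -push_y_y1_beta leq_eqVlt => /orP [/eqP eq_push|//].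
have := lifo wfb y1B wB ltac:(rewrite /above -push_y_y1_beta eq_push eqxx /w; lia).
have := push_index_lt_pop_index wfb wB; rewrite -eq_push push_y_y1_beta => lt_y1w /(_ lt_y1w).
have [lt_yg lt_gy1 _ _] := pop_order_alpha.
have bef_g_w := before_beta g_elt w_elt ltac:(lia).
have lt_gy1B := pop_g_lt_pop_y1_beta.
by move: (before_asym bef_g_w); rewrite /before; lia.
Qed.

Lemma push_X_beta : pushB X = pushB y.
Proof.
have [_ le_y1X] := y_in_block; have [e_elt _ _] := e_sigma_tau; have [w_elt _ pop_w] := w_next_block.
have XB := eltB X_elt; have yB := eltB y_elt; have gB := eltB g_elt; have eB := eltB e_elt.
have lt_wg : X.+1 < g := w_lt_g; have lt_Xe := X_lt_e.
have := push_index_mono (s := beta) (u := y.+1) (v := X) isT ltac:(lia) le_y1X.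
have := push_index_mono (s := beta) (u := X) (v := e) ltac:(lia) ltac:(lia) (ltnW lt_Xe).
have := push_index_mono (s := beta) (u := X) (v := g) ltac:(lia) ltac:(lia) ltac:(lia).
rewrite -push_y_y1_beta => le_Xg le_Xe le_yX.
case: (ltngtP (pushB y) (pushB X)) le_yX => // lt_yX _.
have [_ lt_ey] := e_beta; have := push_index_lt_pop_index wfb eB => lt_e.
have L := lifo wfb XB yB ltac:(by rewrite /above lt_yX) ltac:(lia).
have [lt_yg lt_gy1 _ lt_yX'] := pop_order_alpha.
have bef_X_y := before_beta X_elt y_elt lt_yX'.
have bef_g_y := before_beta g_elt y_elt lt_yg.
have bef_X_g := before_beta X_elt g_elt ltac:(have := pop_y1_le_pop_X; lia).
have bef_g_w := before_beta g_elt w_elt ltac:(lia).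
have [eq_push eq_pop] : pushB X = pushB g /\ popB X = popB g.
  by move: bef_X_y bef_g_y bef_X_g; rewrite /before /above; lia.
have := before_between wfb (u := X) (w := w) (v := g) ltac:(lia) ltac:(lia)
  ltac:(rewrite /w; lia) eq_push eq_pop.
by rewrite (negbTE (before_asym bef_g_w)).
Qed.

Lemma pushed_beta_block : pushed beta (pushB y) = x /\ pushed beta (pushB y).+1 = X.
Proof.
have yB := eltB y_elt; have lt_bs := push_index_lt yB.
have [lt_xy le_y1X] := y_in_block; have [w_elt _ _] := w_next_block.
have x1B : 0 < x.+1 <= pushes beta by lia.
have := push_indexP x1B (ltnW lt_bs); rewrite push_x1_beta ltnn => le1.
have le2 : x <= pushed beta (pushB y).
  case: (posnP x) => [-> // | x_gt0].
  by rewrite push_indexP ?push_low_beta ?(ltnW lt_bs) //; lia.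
have := push_indexP (eltB X_elt) lt_bs; rewrite push_X_beta ltnSn => le3.
have := push_indexP (eltB w_elt) lt_bs.
rewrite ltnS [push_index beta w <= _]leqNgt push_w_beta /= /w => le4.
split; lia.
Qed.

Lemma popped_beta_block : popped beta (pushB y) = popped alpha i.
Proof.
have lt_bs := push_index_lt (eltB y_elt).
rewrite (popped_count wfb (ltnW lt_bs)) (popped_count wfa (ltnW lt_i)) pushes_beta.
apply: eq_in_count => z; rewrite mem_iota => z_in; have z_elt : elt z by lia.
by apply/idP/idP; [apply: pop_alpha_lt_of_beta | apply: pop_beta_lt_of_alpha].
Qed.

Lemma fixed_push_vertices : exists j, [/\ j < size beta,
  vertex beta j = vertex alpha i & vertex beta j.+1 = vertex alpha i.+1].
Proof.
have yB := eltB y_elt; have lt_bs := push_index_lt yB.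
have [a st_a] := push_index_push y_elt; have [b st_b] := push_index_push yB.
rewrite push_y in st_a; have [Ex EX] := pushed_beta_block.
exists (pushB y); split=> //; rewrite !vertexE.
- by rewrite Ex popped_beta_block.
- by rewrite EX !popped_succ // st_a st_b /= !addn0 popped_beta_block.
Qed.

End FixedPush.

Theorem mainTheorem10 (alpha : seq op) (i : nat) :
  well_formed alpha -> reduced alpha ->
  i < size alpha -> is_push (nth (Pop 0) alpha i) ->
  (exists j1 k j2, j1 < k < j2 /\
     corresponds alpha i j1 /\ corresponds alpha i j2 /\ ~ corresponds alpha i k) ->
  fixed alpha i.
Proof.
move=> wfa reda lt_i push_i noncontiguous beta redb eqab.
have wfb : well_formed beta by case: eqab => _ [].
have [y [y_gt0 y1_le push_y push_y1 gap]] :=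
  noncontiguous_pops_gap wfa lt_i push_i noncontiguous.
have [F [lt_F st_F1 st_F push_before_F]] :=
  first_pop_after_i wfa reda lt_i y_gt0 y1_le push_y push_y1 gap.
have [g [g_elt pop_g]] := exists_pop_before_y1 wfa reda lt_i y_gt0 y1_le push_y push_y1 gap.
have [j [lt_j vj vj1]] := fixed_push_vertices wfa lt_i y_gt0 y1_le push_y push_y1 gap
  lt_F st_F1 st_F push_before_F g_elt pop_g wfb redb eqab.
by exists j.
Qed.
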